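(* Let $(e_i)_{i\in\omega}$ be a sequence of events with $<_0$, $\mathrm{Add},\mathrm{Rem},\mathrm{Cnt}$, $\mathrm{val}$, $\chi$ as in the context, and let $\gamma$ be a function. Let FS1$'$ be the property obtained from FS1 by replacing its last clause (there is no event $r$ with $\mathrm{Rem}^1(r)$, $\gamma(r)=\gamma(a)$ and $\gamma(a)<_0 r<_0 a$) by the clause: there is no event $b$ with $\mathrm{Rem}(b)$, $\chi(b)\neq f$, $\gamma(a)<_0 b<_0 a$ and $\mathrm{val}(b)=\mathrm{val}(a)$. Then $\gamma$ satisfies FS0, FS1 and FS2 if and only if $\gamma$ satisfies FS0, FS1$'$ and FS2.
   Context: Setting: an infinite sequence of events $(e_i)_{i\in\omega}$, linearly ordered by $<_0$ where $e_i<_0e_j$ iff $i<j$. Three unary predicates $\mathrm{Add},\mathrm{Rem},\mathrm{Cnt}$ partition the events. Each event $a$ has a key $\mathrm{val}(a)\in\mathbb N$ and a status $\chi(a)\in\{0,1,f\}$, with $\chi(a)\in\{0,1\}$ whenever $\mathrm{Cnt}(a)$. Notation: for $p\in\{0,1,f\}$, $\mathrm{Add}^p(a)$ abbreviates $\mathrm{Add}(a)\wedge\chi(a)=p$, and $\mathrm{Rem}^p(a)$ similarly; $\mathrm{Cnt}^p$ similarly for $p\in\{0,1\}$; for $p\in\{0,1\}$, $\mathrm{Op}^p(a)$ abbreviates $(\mathrm{Add}(a)\vee\mathrm{Rem}(a)\vee\mathrm{Cnt}(a))\wedge\chi(a)=p$. FS0: $<_0$ is a linear ordering of the events; $\mathrm{Add},\mathrm{Rem},\mathrm{Cnt}$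 are pairwise disjoint; $\gamma$ is defined on the set of $\mathrm{Op}^1$ events and its values are $\mathrm{Add}^0$ events. FS1: for every event $a$ with $\mathrm{Op}^1(a)$: $\gamma(a)<_0 a$, $\mathrm{Add}^0(\gamma(a))$, $\mathrm{val}(a)=\mathrm{val}(\gamma(a))$, and there is no event $r$ with $\mathrm{Rem}^1(r)$, $\gamma(r)=\gamma(a)$ and $\gamma(a)<_0 r<_0 a$. FS2: for all events $a<_0 b$ with $\mathrm{Add}^0(a)$ and $\mathrm{Op}^0(b)$: if $\mathrm{val}(a)=\mathrm{val}(b)$ then there is an event $r$ with $a<_0 r<_0 b$, $\mathrm{Rem}^1(r)$ and $a=\gamma(r)$. *)

(* Events are e_i, identified with their index i : nat;
   e_i <_0 e_j iff i < j. *)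
From Stdlib Require Import Arith.

Inductive status := S0 | S1 | Sf.

Section Events.
Variables (Add Rem Cnt : nat -> Prop) (val : nat -> nat) (chi : nat -> status).

Definition Add_ (p : status) (a : nat) : Prop := Add a /\ chi a = p.
Definition Rem_ (p : status) (a : nat) : Prop := Rem a /\ chi a = p.
Definition Op_ (p : status) (a : nat) : Prop :=
  (Add a \/ Rem a \/ Cnt a) /\ chi a = p.

Definition setting : Prop :=
  (forall a, Add a \/ Rem a \/ Cnt a) /\
  (forall a, ~ (Add a /\ Rem a)) /\ (forall a, ~ (Add a /\ Cnt a)) /\
  (forall a, ~ (Rem a /\ Cnt a)) /\
  (forall a, Cnt a -> chi a <> Sf).

Variable gamma : nat -> option nat.

(* FS0 (the ordering <_0 on indices is linear by construction) *)
Definition FS0 : Prop :=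
  (forall a, ~ (Add a /\ Rem a)) /\ (forall a, ~ (Add a /\ Cnt a)) /\
  (forall a, ~ (Rem a /\ Cnt a)) /\
  (forall a, Op_ S1 a <-> gamma a <> None) /\
  (forall a g, gamma a = Some g -> Add_ S0 g).

Definition FS1 : Prop :=
  forall a, Op_ S1 a -> exists g, gamma a = Some g /\
    g < a /\ Add_ S0 g /\ val a = val g /\
    ~ (exists r, Rem_ S1 r /\ gamma r = Some g /\ g < r /\ r < a).

Definition FS1' : Prop :=
  forall a, Op_ S1 a -> exists g, gamma a = Some g /\
    g < a /\ Add_ S0 g /\ val a = val g /\
    ~ (exists b, Rem b /\ chi b <> Sf /\ g < b /\ b < a /\ val b = val a).

Definition FS2 : Prop :=
  forall a b, a < b -> Add_ S0 a -> Op_ S0 b -> val a = val b ->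
    exists r, a < r /\ r < b /\ Rem_ S1 r /\ gamma r = Some a.

End Events.

From Stdlib Require Import Arith Lia.

(* FS1' => FS1: a status-1 removal r with gamma r = g carries the key of g (by
   FS1' applied to r itself), so it is a forbidden non-failed removal of that key.
   FS1 /\ FS2 => FS1': let b be a non-failed removal of the key of g = gamma a
   between g and a.  If chi b = 0, FS2 yields a status-1 removal matched to g
   before b.  If chi b = 1 and gamma b = g', then g' = g makes b itself such a
   removal; g < g' makes FS2 yield one before g'; and g' < g is impossible, as
   FS2 would yield a removal matched to g' before g < b, against FS1 at b. *)

Section FS1_variants.
Variables (Add Rem Cnt : nat -> Prop) (val : nat -> nat) (chi : nat -> status)
  (gamma : nat -> option nat).

Definition removed_before (g a : nat) : Prop :=
  exists r, Rem_ Rem chi S1 r /\ gamma r = Some g /\ g < r /\ r < a.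

Lemma removed_before_mono g a a' :
  a <= a' -> removed_before g a -> removed_before g a'.
Proof.
  intros Haa' (r & Hr & Hgr & Hg_r & Hr_a).
  exists r; split; [exact Hr|]; repeat split; auto; lia.
Qed.

Lemma Add0_Op0 a : Add_ Add chi S0 a -> Op_ Add Rem Cnt chi S0 a.
Proof. intros [HA Hc]; split; [left|]; assumption. Qed.

Lemma Rem_Op p a : Rem a -> chi a = p -> Op_ Add Rem Cnt chi p a.
Proof. intros HR Hc; split; [right; left|]; assumption. Qed.

Lemma FS1'_FS1 :
  FS1' Add Rem Cnt val chi gamma -> FS1 Add Rem Cnt val chi gamma.
Proof.
  intros H1' a Ha.
  destruct (H1' a Ha) as (g & Hg & Hga & Hadd & Hval & Hlive).
  exists g; repeat (split; [assumption|]).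
  intros (r & [Hrem Hchi] & Hgr & Hg_r & Hr_a).
  destruct (H1' r (Rem_Op S1 r Hrem Hchi)) as (g' & Hg' & _ & _ & Hval_r & _).
  rewrite Hgr in Hg'; injection Hg' as <-.
  apply Hlive; exists r; repeat split; auto; congruence.
Qed.

Section FS1_and_FS2.
Hypothesis H1 : FS1 Add Rem Cnt val chi gamma.
Hypothesis H2 : FS2 Add Rem Cnt val chi gamma.

Lemma FS2_removed_before g b :
  Add_ Add chi S0 g -> Op_ Add Rem Cnt chi S0 b -> g < b -> val g = val b ->
  removed_before g b.
Proof.
  intros Hg Hb Hgb Hval.
  destruct (H2 g b) as (r & Hg_r & Hr_b & Hr & Hgr); auto.
  exists r; auto.
Qed.

Lemma Op1_matched_or_removed g b :
  Add_ Add chi S0 g -> Op_ Add Rem Cnt chi S1 b -> g < b -> val g = val b ->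
  gamma b = Some g \/ removed_before g b.
Proof.
  intros Hg Hb Hgb Hval.
  destruct (H1 b Hb) as (g' & Hg' & Hg'b & Hadd' & Hval' & Hnone).
  destruct (Nat.lt_trichotomy g g') as [Hlt | [<- | Hlt]].
  - right; apply removed_before_mono with g'; [lia|].
    apply FS2_removed_before; auto using Add0_Op0; congruence.
  - left; assumption.
  - exfalso; apply Hnone, removed_before_mono with g; [lia|].
    apply FS2_removed_before; auto using Add0_Op0; congruence.
Qed.

Lemma live_removal_removed g b :
  Add_ Add chi S0 g -> Rem b -> chi b <> Sf -> g < b -> val g = val b ->
  removed_before g (S b).
Proof.
  intros Hg Hrem Hchi Hgb Hval.
  destruct (chi b) eqn:Ec; [| | contradiction].
  - apply removed_before_mono with b; [lia|].
    apply FS2_removed_before; auto using Rem_Op.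
  - destruct (Op1_matched_or_removed g b) as [Hgam | Hrm]; auto using Rem_Op.
    + exists b; repeat split; auto.
    + apply removed_before_mono with b; [lia | assumption].
Qed.

Lemma FS1_FS2_FS1' : FS1' Add Rem Cnt val chi gamma.
Proof.
  intros a Ha.
  destruct (H1 a Ha) as (g & Hg & Hga & Hadd & Hval & Hnone).
  exists g; repeat (split; [assumption|]).
  intros (b & Hrem & Hchi & Hgb & Hba & Hvalb).
  apply Hnone, removed_before_mono with (S b); [lia|].
  apply live_removal_removed; auto; congruence.
Qed.

End FS1_and_FS2.
End FS1_variants.

Theorem lemma2p2 (Add Rem Cnt : nat -> Prop) (val : nat -> nat)
  (chi : nat -> status) (gamma : nat -> option nat) :
  setting Add Rem Cnt chi ->
  ((FS0 Add Rem Cnt chi gamma /\ FS1 Add Rem Cnt val chi gamma /\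
    FS2 Add Rem Cnt val chi gamma)
   <->
   (FS0 Add Rem Cnt chi gamma /\ FS1' Add Rem Cnt val chi gamma /\
    FS2 Add Rem Cnt val chi gamma)).
Proof.
  intros _.
  split; intros (H0 & H1 & H2); (split; [exact H0 | split; [| exact H2]]).
  - apply FS1_FS2_FS1'; assumption.
  - apply FS1'_FS1; assumption.
Qed.
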